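(* Let $\bar\pi^*=A\pi^*$ be the optimal investment–reinsurance strategy for problem $(\bar P_{\varepsilon,\bar K_\pi})$, where $\pi^*(t)=\alpha(t,V^{v_f,\hat\pi_{\lambda^*}}(t))\hat\pi_{\lambda^*}$ with $\alpha(t,\cdot)>0$ for $t\in[0,T)$ is the optimal strategy for $(P_{\varepsilon,K_\pi})$. Then for $t\in[0,T)$ it is optimal for the insurer to hold a strictly positive position in reinsurance, i.e. $\bar\pi_2^*(t)>0$, if and only if $$SR_2^{\lambda^*}<\rho\cdot SR_1^{\lambda^*},\qquad\text{where } SR_i^{\lambda^*}=\frac{\mu_i+\lambda_i^*-r}{\sigma_i},\ i=1,2,$$ and $\lambda^*=\arg\min_{x\in K_\pi}\|\gamma+\sigma^{-1}x\|^2$.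
   Context: Market: $dS_0=S_0r\,dt$, $dS_1=S_1(\mu_1dt+\sigma_1dW_1)$, $dS_2=S_2(\mu_2dt+\sigma_2(\rho dW_1+\sqrt{1-\rho^2}dW_2))$, two-dimensional Brownian motion $W$ under $\mathbb Q$; constants $\sigma_i>0$, $\rho\in(-1,1)$; $\sigma=\begin{pmatrix}\sigma_1&0\\ \sigma_2\rho&\sigma_2\sqrt{1-\rho^2}\end{pmatrix}$, $\mu=(\mu_1,\mu_2)'$, $\bar1=(1,1)'$, $\gamma=\sigma^{-1}(\mu-r\bar1)\ne0$; $K_\pi=[0,\infty)\times(-\infty,0]$, $\bar K_\pi=[0,\infty)^2$; utility $U(x)=x^b/b$, $b<1,b\ne0$; $\hat\pi_{\lambda^*}=\frac1{1-b}(\sigma\sigma')^{-1}(\mu+\lambda^*-r\bar1)$. Reinsurance: $G_T>0$, $v_0>0$, $\pi_B^{CM}\in(0,1]$; $V^{v_0,\pi_B}$ is the constant-mix wealth with fraction $\pi_B^{CM}$ in $S_2$ and the rest in $S_0$; $P(t)=S_0(t)\mathbb E_{\tilde{\mathbb Q}}[S_0(T)^{-1}(G_T-V^{v_0,\pi_B}(T))^+\mid\mathcal F_t]$ (a put, $\tilde{\mathbb Q}$ risk-neutral); $d_+(t)=\frac{\ln(V^{v_0,\pi_B}(t)/G_T)+(r+\frac12(\pi_B^{CM}\sigma_2)^2)(T-t)}{\pi_B^{CM}\sigma_2\sqrt{T-t}}$; $A(t)=\operatorname{diag}\big(1,\frac{P(t)}{\pi_B^{CM}V^{v_0,\pi_B}(t)(\Phi(d_+(t))-1)}\big)$.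 $(P_{\varepsilon,K_\pi})$: maximize expected utility of terminal wealth from trading $S_0,S_1,S_2$ (fractions $\pi=(\pi_1,\pi_2)'$ in $S_1,S_2$) subject to $\mathbb Q(V(T)<G_T)\le\varepsilon$ and $\pi(t)\in K_\pi$. $(\bar P_{\varepsilon,\bar K_\pi})$: the same with trading in $S_0,S_1,P$ (fractions $\bar\pi=(\bar\pi_1,\bar\pi_2)'$ in $S_1,P$) and $\bar\pi(t)\in\bar K_\pi$. Here $v_f$ denotes the initial capital parameter of the optimal solution of $(P_{\varepsilon,K_\pi})$. *)

From Stdlib Require Import Reals Lra.
From Coquelicot Require Import Coquelicot.
Open Scope R_scope.

Definition vadd (x y : R * R) : R * R := (fst x + fst y, snd x + snd y).
Definition vscale (c : R) (x : R * R) : R * R := (c * fst x, c * snd x).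
Definition norm2 (x : R * R) : R := fst x ^ 2 + snd x ^ 2.

(* sigma = [[s1, 0], [s2*rho, s2*sqrt(1-rho^2)]] ; sigma^{-1} x *)
Definition sig_inv (s1 s2 rho : R) (x : R * R) : R * R :=
  (fst x / s1, (snd x - s2 * rho * (fst x / s1)) / (s2 * sqrt (1 - rho ^ 2))).
Definition sigT_inv (s1 s2 rho : R) (y : R * R) : R * R :=
  let z2 := snd y / (s2 * sqrt (1 - rho ^ 2)) in
  ((fst y - s2 * rho * z2) / s1, z2).
Definition sigsigT_inv (s1 s2 rho : R) (v : R * R) : R * R :=
  sigT_inv s1 s2 rho (sig_inv s1 s2 rho v).

Definition gamma (r mu1 mu2 s1 s2 rho : R) : R * R :=
  sig_inv s1 s2 rho (mu1 - r, mu2 - r).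

Definition K_pi (x : R * R) : Prop := 0 <= fst x /\ snd x <= 0.

Definition is_lambda_star (r mu1 mu2 s1 s2 rho : R) (lam : R * R) : Prop :=
  K_pi lam /\
  forall x, K_pi x ->
    norm2 (vadd (gamma r mu1 mu2 s1 s2 rho) (sig_inv s1 s2 rho lam))
    <= norm2 (vadd (gamma r mu1 mu2 s1 s2 rho) (sig_inv s1 s2 rho x)).

Definition pi_hat (b r mu1 mu2 s1 s2 rho : R) (lam : R * R) : R * R :=
  vscale (1 / (1 - b))
    (sigsigT_inv s1 s2 rho (mu1 + fst lam - r, mu2 + snd lam - r)).

Definition SR1 (r mu1 s1 : R) (lam : R * R) : R := (mu1 + fst lam - r) / s1.
Definition SR2 (r mu2 s2 : R) (lam : R * R) : R := (mu2 + snd lam - r) / s2.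

Definition Phi (x : R) : R :=
  / sqrt (2 * PI) *
  RInt_gen (fun u => exp (- (u ^ 2) / 2)) (Rbar_locally m_infty) (at_point x).

(* d_+(t) for the constant-mix wealth value VB = V^{v0,piB}(t) *)
Definition d_plus (r s2 piB GT T t VB : R) : R :=
  (ln (VB / GT) + (r + / 2 * (piB * s2) ^ 2) * (T - t))
  / (piB * s2 * sqrt (T - t)).

(* Price at time t of the put (G_T - V^{v0,piB}(T))^+ : V^{v0,piB} is under the
   risk-neutral measure a geometric Brownian motion with drift r and
   volatility piB*s2, so P(t) is given by the Black-Scholes put formula. *)
Definition put_price (r s2 piB GT T t VB : R) : R :=
  let dp := d_plus r s2 piB GT T t VB in
  let dm := dp - piB * s2 * sqrt (T - t) in
  GT * exp (- r * (T - t)) * Phi (- dm) - VB * Phi (- dp).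

(* second diagonal entry of A(t) *)
Definition A22 (r s2 piB GT T t VB : R) : R :=
  put_price r s2 piB GT T t VB
  / (piB * VB * (Phi (d_plus r s2 piB GT T t VB) - 1)).

(* pi*(t) = alpha(t, V^{v_f, hat pi}(t)) hat pi_{lambda*},
   bar pi*(t) = A(t) pi*(t); second component: *)
Definition pibar2_star (b r mu1 mu2 s1 s2 rho piB GT T t VB : R)
  (alpha : R -> R -> R) (Vopt : R) (lam : R * R) : R :=
  A22 r s2 piB GT T t VB *
  (alpha t Vopt * snd (pi_hat b r mu1 mu2 s1 s2 rho lam)).

(* The sign of [pibar2_star] is a product of three signs.  The weight [alpha]
   is positive.  The entry [A22] = P / (piB V (Phi d_+ - 1)) is negative, since
   Phi < 1 and the Black-Scholes put price P is positive.  The second component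
   of [pi_hat] is (SR2 - rho SR1) / ((1 - b) s2 (1 - rho^2)).

   The put price is P = V F(m) for the log-moneyness m, where
   F(m) = e^m Phi(m/a + a/2) - Phi(m/a - a/2).  Its derivative is
   e^m Phi(m/a + a/2) > 0, because the two Gaussian density terms cancel, and
   F tends to 0 at -oo, so F > 0.  The bounds 0 < Phi < 1 rest on the total
   mass sqrt(2 pi) of exp(-u^2/2), transferred from the Gaussian integral of
   MathComp-Analysis. *)

From Stdlib Require Import Reals Lra.
From Coquelicot Require Import Coquelicot.
Open Scope R_scope.

Definition gauss (u : R) : R := exp (- (u ^ 2) / 2).
Definition gauss_RInt (y : R) : R := RInt gauss 0 y.

Lemma continuous_gauss u : continuous gauss u.
Proof. apply (ex_derive_continuous gauss). unfold gauss. auto_derive. auto. Qed.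

Lemma ex_RInt_gauss a b : ex_RInt gauss a b.
Proof.
apply (ex_RInt_continuous (V := R_CompleteNormedModule)). intros. apply continuous_gauss.
Qed.

Lemma is_derive_gauss_RInt y : is_derive gauss_RInt y (gauss y).
Proof.
apply (is_derive_RInt gauss gauss_RInt 0).
- apply filter_forall. intro z. apply (RInt_correct (V := R_CompleteNormedModule)).
  apply ex_RInt_gauss.
- apply continuous_gauss.
Qed.

Lemma Derive_gauss_RInt y : Derive gauss_RInt y = gauss y.
Proof. apply is_derive_unique, is_derive_gauss_RInt. Qed.

Lemma derivable_pt_lim_gauss_RInt_scaled z :
  derivable_pt_lim (fun w => gauss_RInt (sqrt 2 * w) / sqrt 2) z (exp (- z ^ 2)).
Proof.
apply is_derive_Reals.
assert (Hs : 0 < sqrt 2) by (apply sqrt_lt_R0; lra).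
auto_derive.
- exists (gauss (sqrt 2 * z)). apply is_derive_gauss_RInt.
- rewrite Derive_gauss_RInt. unfold gauss. field_simplify; [f_equal | lra].
  replace ((sqrt 2 * z) ^ 2) with (sqrt 2 ^ 2 * z ^ 2) by ring.
  rewrite pow2_sqrt by lra. field.
Qed.

Module GaussianIntegral.
From mathcomp Require Import all_boot all_order all_algebra.
From mathcomp Require Import all_classical all_reals all_analysis.
From mathcomp Require Import Rstruct Rstruct_topology.
Import Order.TTheory GRing.Theory Num.Theory numFieldNormedType.Exports.
Import gauss_integral_proof.
Local Open Scope classical_set_scope.
Local Open Scope ring_scope.

Lemma derivable_pt_lim_derive1 (f : R^o -> R^o) x l :
  derivable_pt_lim f x l -> derivable f x 1 /\ derive1 f x = l.
Proof.
move=> fl; rewrite derive1E /derive /derivable.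
set dq := (X in lim X).
suff dql : dq --> l by split; [apply/cvg_ex; exists l | exact/cvg_lim].
apply/cvgrPdist_lt => e /RltP e0.
have [[d d0] fd] := fl e e0.
have d0r : 0 < d by apply/RltP.
exists d => // h /= hd h0.
have hd' : (Rabs h < d)%coqR by apply/RltP; rewrite RabsE -normrN -[X in `|X|]add0r.
have /RltP := fd h (elimN eqP h0) hd'.
rewrite RabsE distrC /GRing.scale /= mulr1 [h + x]addrC.
by rewrite /Rdiv RminusE RmultE RinvE RplusE mulrC.
Qed.

Lemma Rintegral_derivable_pt_lim (f F : R^o -> R^o) a b : a < b ->
  {within `[a, b], continuous f} -> (forall x, derivable_pt_lim F x (f x)) ->
  Rintegral lebesgue_measure `[a, b] f = F b - F a.
Proof.
move=> ab cf dF.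
have dF' x := @derivable_pt_lim_derive1 F x (f x) (dF x).
have cF x : {for x, continuous F}.
  by apply: differentiable_continuous; apply/derivable1_diffP; case: (dF' x).
rewrite /Rintegral (@continuous_FTC2 _ f F a b ab cf) //=.
- split; first by move=> x _; case: (dF' x).
  + exact/cvg_at_right_filter/cF.
  + exact/cvg_at_left_filter/cF.
- by move=> x _; case: (dF' x).
Qed.

Lemma pi_PI : pi = PI.
Proof.
(* Both sides are 4 times the integral of 1 / (1 + x^2) over [0, 1]. *)
have := @integral0_oneDsqr R 1 ler01.
rewrite atan1 (@Rintegral_derivable_pt_lim _ Ratan.atan 0 1 ltr01); first last.
- by move=> x; have := derivable_pt_lim_atan x; rewrite /oneDsqr RpowE RinvE RplusE.
- by apply: continuous_in_subspaceT => x _; exact: continuous_oneDsqrV.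
rewrite atan_1 atan_0 subr0 RdivE.
have -> : 4%coqR = 4 :> R by rewrite -INRE INR_IZR_INZ.
by move/(congr1 ( *%R^~ 4)); rewrite !mulfVK.
Qed.

Lemma integral0_gauss_RInt z : 0 < z ->
  integral0_gauss z = (gauss_RInt (sqrt 2 * z) / sqrt 2)%coqR.
Proof.
move=> z0; rewrite /integral0_gauss.
rewrite (@Rintegral_derivable_pt_lim gauss_fun
  (fun w => gauss_RInt (sqrt 2 * w) / sqrt 2)%coqR 0 z z0); first last.
- by move=> x; have := derivable_pt_lim_gauss_RInt_scaled x; rewrite RexpE RpowE.
- by apply: continuous_subspaceT; exact: continuous_gauss_fun.
by rewrite Rmult_0_r /gauss_RInt RInt_point Rdiv_0_l subr0.
Qed.

Lemma integral0_gauss_cvg :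
  @integral0_gauss R x @[x --> +oo] --> Num.sqrt pi / 2.
Proof.
have : Num.sqrt (@integral0_gauss R x ^+ 2) @[x --> +oo]
    --> Num.sqrt (pi / 4).
  apply: continuous_cvg; first exact: sqrt_continuous.
  exact: cvg_integral0_gauss_sqr.
rewrite sqrtrM ?pi_ge0 // sqrtrV // (_ : 4 = 2 ^+ 2); last by rewrite expr2 -natrM.
rewrite sqrtr_sqr ger0_norm //; apply: cvg_trans; apply: near_eq_cvg.
near=> x => /=.
by rewrite sqrtr_sqr ger0_norm //; exact: integral0_gauss_ge0.
Unshelve. all: end_near. Qed.

Lemma cvg_pinfty_is_lim (f : R -> R) (l : R) :
  f x @[x --> +oo] --> l -> Continuity.is_lim f p_infty l.
Proof.
move=> /(@cvgrPdist_lt _ R^o) fl; apply/is_lim_spec => eps.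
have [M [_ HM]] := fl eps (introT RltP (cond_pos eps)).
exists M => x /RltP Mx; apply/RltP.
by rewrite RabsE distrC; exact: HM.
Qed.

Lemma is_lim_gauss_RInt_scaled :
  Continuity.is_lim (fun z => gauss_RInt (sqrt 2 * z) / sqrt 2)%coqR p_infty
    (sqrt PI / 2)%coqR.
Proof.
apply: cvg_pinfty_is_lim.
have -> : (sqrt PI / 2)%coqR = Num.sqrt pi / 2.
  by rewrite RsqrtE pi_PI RdivE -INRE INR_IZR_INZ.
apply: cvg_trans integral0_gauss_cvg; apply: near_eq_cvg.
by near=> z; rewrite integral0_gauss_RInt.
Unshelve. all: end_near. Qed.

End GaussianIntegral.

Lemma sqrt_2PI_pos : 0 < sqrt (2 * PI).
Proof. apply sqrt_lt_R0. pose proof PI_RGT_0. lra. Qed.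

Lemma is_lim_affine_p_infty a c : 0 < a -> is_lim (fun y => y / a + c) p_infty p_infty.
Proof.
intro Ha. apply is_lim_spec. intro M. exists (a * (M - c)). intros y Hy.
assert (0 < (y - a * (M - c)) / a) by (apply Rdiv_lt_0_compat; lra).
replace (y / a) with ((y - a * (M - c)) / a + (M - c)) by (field; lra). lra.
Qed.

Lemma is_lim_affine_m_infty a c : 0 < a -> is_lim (fun y => y / a + c) m_infty m_infty.
Proof.
intro Ha. apply is_lim_spec. intro M. exists (a * (M - c)). intros y Hy.
assert (0 < (a * (M - c) - y) / a) by (apply Rdiv_lt_0_compat; lra).
replace (y / a) with ((M - c) - (a * (M - c) - y) / a) by (field; lra). lra.
Qed.

Lemma is_lim_gauss_RInt_p_infty : is_lim gauss_RInt p_infty (sqrt (2 * PI) / 2).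
Proof.
assert (Hs : 0 < sqrt 2) by (apply sqrt_lt_R0; lra).
replace (sqrt (2 * PI) / 2) with (sqrt 2 * (sqrt PI / 2))
  by (rewrite sqrt_mult by (pose proof PI_RGT_0; lra); field).
apply (is_lim_ext (fun y => sqrt 2 * (gauss_RInt (sqrt 2 * (y / sqrt 2 + 0)) / sqrt 2))).
{ intro y. replace (sqrt 2 * (y / sqrt 2 + 0)) with y by (field; lra). field. lra. }
apply (is_lim_scal_l _ (sqrt 2) p_infty (sqrt PI / 2)).
apply (is_lim_comp (fun z => gauss_RInt (sqrt 2 * z) / sqrt 2) (fun y => y / sqrt 2 + 0)
  p_infty (sqrt PI / 2) p_infty).
- apply GaussianIntegral.is_lim_gauss_RInt_scaled.
- apply is_lim_affine_p_infty. exact Hs.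
- exists 0. intros. discriminate.
Qed.

Lemma gauss_even u : gauss (- u) = gauss u.
Proof. unfold gauss. replace ((- u) ^ 2) with (u ^ 2) by ring. reflexivity. Qed.

Lemma gauss_RInt_opp y : gauss_RInt (- y) = - gauss_RInt y.
Proof.
assert (Hy : is_RInt gauss 0 y (gauss_RInt y))
  by apply (RInt_correct (V := R_CompleteNormedModule)), ex_RInt_gauss.
assert (Hmy : is_RInt (fun u => opp (gauss (- u))) 0 y (gauss_RInt (- y))).
{ apply (is_RInt_comp_opp (V := R_NormedModule) gauss 0 y). rewrite Ropp_0.
  apply (RInt_correct (V := R_CompleteNormedModule)), ex_RInt_gauss. }
apply (is_RInt_ext _ (fun u => opp (gauss u))) in Hmy.
2:{ intros u _. rewrite gauss_even. reflexivity. }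
rewrite <- (is_RInt_unique _ _ _ _ Hmy).
exact (is_RInt_unique _ _ _ _ (is_RInt_opp (V := R_NormedModule) gauss 0 y _ Hy)).
Qed.

Lemma is_lim_gauss_RInt_m_infty : is_lim gauss_RInt m_infty (- (sqrt (2 * PI) / 2)).
Proof.
apply (is_lim_ext (fun y => - gauss_RInt (- y))).
{ intro y. rewrite gauss_RInt_opp. ring. }
apply (is_lim_opp _ m_infty (sqrt (2 * PI) / 2)).
apply (is_lim_comp gauss_RInt Ropp m_infty (sqrt (2 * PI) / 2) p_infty).
- apply is_lim_gauss_RInt_p_infty.
- apply (is_lim_opp (fun y => y) m_infty m_infty), is_lim_id.
- exists 0. intros. discriminate.
Qed.

Lemma gauss_RInt_increasing x y : x < y -> gauss_RInt x < gauss_RInt y.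
Proof.
intro Hxy. apply (incr_function gauss_RInt m_infty p_infty gauss); try easy.
- intros. apply is_derive_gauss_RInt.
- intros. apply exp_pos.
Qed.

Lemma increasing_lt_is_lim_p_infty (f : R -> R) (l : R) :
  (forall x y, x < y -> f x < f y) -> is_lim f p_infty l -> forall x, f x < l.
Proof.
intros Hf Hl x.
assert (H : Rbar_le (f (x + 1)) l).
{ apply (is_lim_le_loc (fun _ => f (x + 1)) f p_infty).
  - exists (x + 1). intros y Hy. apply Rlt_le, Hf, Hy.
  - apply is_lim_const.
  - exact Hl. }
simpl in H. pose proof (Hf x (x + 1) ltac:(lra)). lra.
Qed.

Lemma increasing_gt_is_lim_m_infty (f : R -> R) (l : R) :
  (forall x y, x < y -> f x < f y) -> is_lim f m_infty l -> forall x, l < f x.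
Proof.
intros Hf Hl x.
assert (H : Rbar_le l (f (x - 1))).
{ apply (is_lim_le_loc f (fun _ => f (x - 1)) m_infty).
  - exists (x - 1). intros y Hy. apply Rlt_le, Hf, Hy.
  - exact Hl.
  - apply is_lim_const. }
simpl in H. pose proof (Hf (x - 1) x ltac:(lra)). lra.
Qed.

Lemma Phi_gauss_RInt x : Phi x = / 2 + gauss_RInt x / sqrt (2 * PI).
Proof.
pose proof sqrt_2PI_pos as Hs.
unfold Phi. fold gauss.
rewrite (is_RInt_gen_unique gauss (gauss_RInt x - - (sqrt (2 * PI) / 2))).
{ field. lra. }
apply (is_RInt_gen_ext (Derive gauss_RInt)).
{ apply filter_forall. intros. apply Derive_gauss_RInt. }
apply is_RInt_gen_Derive.
- apply filter_forall. intros. eexists. apply is_derive_gauss_RInt.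
- apply filter_forall. intros.
  apply (continuous_ext gauss). { intro. symmetry. apply Derive_gauss_RInt. }
  apply continuous_gauss.
- apply is_lim_gauss_RInt_m_infty.
- intros P HP. exact (locally_singleton _ _ HP).
Qed.

Lemma Phi_bounds x : 0 < Phi x < 1.
Proof.
pose proof sqrt_2PI_pos as Hs.
pose proof (increasing_lt_is_lim_p_infty _ _ gauss_RInt_increasing
  is_lim_gauss_RInt_p_infty x).
pose proof (increasing_gt_is_lim_m_infty _ _ gauss_RInt_increasing
  is_lim_gauss_RInt_m_infty x).
rewrite Phi_gauss_RInt.
split; apply (Rmult_lt_reg_r (sqrt (2 * PI))); auto; field_simplify; lra.
Qed.

Lemma is_derive_Phi x : is_derive Phi x (gauss x / sqrt (2 * PI)).
Proof.
apply (is_derive_ext (fun y => / 2 + gauss_RInt y / sqrt (2 * PI))).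
{ intro y. symmetry. apply Phi_gauss_RInt. }
pose proof sqrt_2PI_pos as Hs.
auto_derive.
- eexists. apply is_derive_gauss_RInt.
- rewrite Derive_gauss_RInt. field. lra.
Qed.

Lemma is_lim_Phi_m_infty : is_lim Phi m_infty 0.
Proof.
pose proof sqrt_2PI_pos as Hs.
apply (is_lim_ext (fun y => / 2 + gauss_RInt y * / sqrt (2 * PI))).
{ intro y. rewrite Phi_gauss_RInt. reflexivity. }
replace 0 with (/ 2 + - (sqrt (2 * PI) / 2) * / sqrt (2 * PI)) by (field; lra).
apply (is_lim_plus _ _ m_infty (/ 2) (- (sqrt (2 * PI) / 2) * / sqrt (2 * PI))).
- apply is_lim_const.
- apply (is_lim_scal_r gauss_RInt (/ sqrt (2 * PI)) m_infty (- (sqrt (2 * PI) / 2))).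
  apply is_lim_gauss_RInt_m_infty.
- reflexivity.
Qed.

Section NormalizedPut.

Variable a : R.
Hypothesis a_pos : 0 < a.

Definition normalized_put (m : R) : R :=
  exp m * Phi (m / a + a / 2) - Phi (m / a - a / 2).

Lemma exp_gauss_shift m : exp m * gauss (m / a + a / 2) = gauss (m / a - a / 2).
Proof. unfold gauss. rewrite <- exp_plus. f_equal. field. lra. Qed.

Lemma is_derive_normalized_put m :
  is_derive normalized_put m (exp m * Phi (m / a + a / 2)).
Proof.
pose proof sqrt_2PI_pos as Hs.
assert (DPhi : forall x, Derive Phi x = gauss x / sqrt (2 * PI))
  by (intro; apply is_derive_unique, is_derive_Phi).
unfold normalized_put. auto_derive.
- split; [eexists; apply is_derive_Phi |].
  split; [eexists; apply is_derive_Phi | exact I].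
- rewrite !DPhi.
  replace (m * / a + a / 2) with (m / a + a / 2) by (unfold Rdiv; ring).
  replace (m * / a + - (a / 2)) with (m / a - a / 2) by (unfold Rdiv; ring).
  rewrite <- exp_gauss_shift. field. lra.
Qed.

Lemma normalized_put_increasing m1 m2 : m1 < m2 -> normalized_put m1 < normalized_put m2.
Proof.
intro H. apply (incr_function normalized_put m_infty p_infty
  (fun m => exp m * Phi (m / a + a / 2))); try easy.
- intros. apply is_derive_normalized_put.
- intros m _ _. pose proof (exp_pos m). pose proof (Phi_bounds (m / a + a / 2)).
  apply Rmult_lt_0_compat; lra.
Qed.

Lemma is_lim_normalized_put_m_infty : is_lim normalized_put m_infty 0.
Proof.
replace (Finite 0) with (Rbar_minus 0 0) by (simpl; f_equal; ring).
apply (is_lim_minus _ _ m_infty 0 0).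
- apply (is_lim_le_le_loc (fun _ => 0) exp).
  + exists 0. intros m _. pose proof (exp_pos m). pose proof (Phi_bounds (m / a + a / 2)).
    split; nra.
  + apply is_lim_const.
  + apply is_lim_exp_m.
- apply (is_lim_comp Phi (fun m => m / a + - (a / 2)) m_infty 0 m_infty).
  + apply is_lim_Phi_m_infty.
  + apply is_lim_affine_m_infty, a_pos.
  + exists 0. intros. discriminate.
- reflexivity.
Qed.

Lemma normalized_put_pos m : 0 < normalized_put m.
Proof.
exact (increasing_gt_is_lim_m_infty _ _ normalized_put_increasing
  is_lim_normalized_put_m_infty m).
Qed.

End NormalizedPut.

Lemma put_price_normalized r s2 piB GT T t VB :
  0 < s2 -> 0 < GT -> 0 < piB -> t < T -> 0 < VB ->
  put_price r s2 piB GT T t VB =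
  VB * normalized_put (piB * s2 * sqrt (T - t)) (ln GT - ln VB - r * (T - t)).
Proof.
intros Hs2 HGT HpiB HtT HVB.
assert (Hst : 0 < sqrt (T - t)) by (apply sqrt_lt_R0; lra).
assert (Ha : 0 < piB * s2 * sqrt (T - t)) by (repeat apply Rmult_lt_0_compat; auto).
assert (Hsq : (piB * s2) ^ 2 * (T - t) = (piB * s2 * sqrt (T - t)) ^ 2).
{ rewrite !Rpow_mult_distr, pow2_sqrt by lra. ring. }
assert (Hdp : d_plus r s2 piB GT T t VB
  = - ((ln GT - ln VB - r * (T - t)) / (piB * s2 * sqrt (T - t))
       - piB * s2 * sqrt (T - t) / 2)).
{ unfold d_plus. rewrite ln_div by lra.
  replace ((r + / 2 * (piB * s2) ^ 2) * (T - t))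
    with (r * (T - t) + / 2 * ((piB * s2) ^ 2 * (T - t))) by ring.
  rewrite Hsq. field. lra. }
assert (Hdisc : GT * exp (- r * (T - t)) = VB * exp (ln GT - ln VB - r * (T - t))).
{ replace (- r * (T - t)) with (- (r * (T - t))) by ring.
  unfold Rminus. rewrite !exp_plus, !exp_Ropp, !exp_ln by lra.
  field. split; [apply Rgt_not_eq, exp_pos | lra]. }
unfold put_price, normalized_put. cbv zeta. rewrite Hdp, Hdisc.
set (a := piB * s2 * sqrt (T - t)). set (m := ln GT - ln VB - r * (T - t)).
replace (- (- (m / a - a / 2) - a)) with (m / a + a / 2) by lra.
rewrite Ropp_involutive. ring.
Qed.

Lemma put_price_pos r s2 piB GT T t VB :
  0 < s2 -> 0 < GT -> 0 < piB -> t < T -> 0 < VB -> 0 < put_price r s2 piB GT T t VB.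
Proof.
intros Hs2 HGT HpiB HtT HVB.
rewrite put_price_normalized by assumption.
apply Rmult_lt_0_compat; [exact HVB |].
apply normalized_put_pos.
apply Rmult_lt_0_compat; [apply Rmult_lt_0_compat; assumption |].
apply sqrt_lt_R0. lra.
Qed.

Lemma A22_neg r s2 piB GT T t VB :
  0 < s2 -> 0 < GT -> 0 < piB -> t < T -> 0 < VB -> A22 r s2 piB GT T t VB < 0.
Proof.
intros Hs2 HGT HpiB HtT HVB.
pose proof (put_price_pos r s2 piB GT T t VB Hs2 HGT HpiB HtT HVB) as HP.
pose proof (Phi_bounds (d_plus r s2 piB GT T t VB)) as HPhi.
unfold A22. apply Rdiv_pos_neg; [exact HP |].
apply Rmult_pos_neg; [apply Rmult_lt_0_compat |]; lra.
Qed.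

Lemma pi_hat2_Sharpe b r mu1 mu2 s1 s2 rho lam :
  0 < s1 -> 0 < s2 -> -1 < rho < 1 -> b < 1 ->
  snd (pi_hat b r mu1 mu2 s1 s2 rho lam)
  = (SR2 r mu2 s2 lam - rho * SR1 r mu1 s1 lam) / ((1 - b) * s2 * (1 - rho ^ 2)).
Proof.
intros Hs1 Hs2 Hrho Hb.
assert (Hq : 0 < sqrt (1 - rho ^ 2)) by (apply sqrt_lt_R0; nra).
assert (Hq2 : sqrt (1 - rho ^ 2) ^ 2 = 1 - rho ^ 2) by (apply pow2_sqrt; nra).
unfold pi_hat, vscale, sigsigT_inv, sigT_inv, sig_inv, SR1, SR2. cbn [fst snd].
set (q := sqrt (1 - rho ^ 2)) in *. rewrite <- Hq2. field. lra.
Qed.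

Lemma Rmult_neg_pos_div_gt0 (A k X d : R) :
  A < 0 -> 0 < k -> 0 < d -> (0 < A * (k * (X / d)) <-> X < 0).
Proof.
intros HA Hk Hd.
replace (A * (k * (X / d))) with (A * k / d * X) by (field; lra).
assert (Hc : A * k / d < 0) by (apply Rdiv_neg_pos; nra).
split; intro H; nra.
Qed.

Theorem proposition4
  (r mu1 mu2 s1 s2 rho b GT piB T t VB Vopt : R)
  (alpha : R -> R -> R) (lam : R * R) :
  0 < s1 -> 0 < s2 -> -1 < rho < 1 ->
  gamma r mu1 mu2 s1 s2 rho <> (0, 0) ->
  b < 1 -> b <> 0 ->
  0 < GT -> 0 < piB <= 1 ->
  0 <= t < T ->
  0 < VB ->
  (forall u x, 0 <= u < T -> 0 < alpha u x) ->
  is_lambda_star r mu1 mu2 s1 s2 rho lam ->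
  (0 < pibar2_star b r mu1 mu2 s1 s2 rho piB GT T t VB alpha Vopt lam
   <-> SR2 r mu2 s2 lam < rho * SR1 r mu1 s1 lam).
Proof.
intros Hs1 Hs2 Hrho _ Hb _ HGT HpiB Ht HVB Halpha _.
unfold pibar2_star. rewrite pi_hat2_Sharpe by assumption.
rewrite Rmult_neg_pos_div_gt0.
- lra.
- apply A22_neg; lra.
- apply Halpha. lra.
- apply Rmult_lt_0_compat; [apply Rmult_lt_0_compat; lra | nra].
Qed.
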